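(* Let $(G,X,\alpha)$ be a $G$-Tychonoff space and let $\mathcal U$ be the maximal equiuniformity on $X$ for $(G,X,\alpha)$. If $(H,X,\gamma)$ is a $G$-space, $(\varphi,\mathrm{id}):(G,X,\alpha)\to(H,X,\gamma)$ is an equivariant pair of maps, and $\mathcal U$ is an equiuniformity on $X$ for $(H,X,\gamma)$, then $\mathcal U$ is the maximal equiuniformity on $X$ for $(H,X,\gamma)$.
   Context: All spaces are Tychonoff and all maps continuous. A $G$-space $(G,X,\alpha)$ is a topological group $G$ with a continuous action $\alpha:G\times X\to X$. An equivariant pair of maps $(\varphi,\mathrm{id}):(G,X,\alpha)\to(H,X,\gamma)$ consists of a continuous homomorphism $\varphi:G\to H$ with $\alpha(g,x)=\gamma(\varphi(g),x)$ for all $g\in G,x\in X$. Uniformities are given by families of open covers. A uniformity $\mathcal U$ is an equiuniformity for $(G,X,\alpha)$ if it is saturated ($gu\in\mathcal U$ for $u\in\mathcal U$, $g\in G$) and bounded (for each $u\in\mathcal U$ there exist an open neighborhood $O$ of the unit in $G$ and $v\in\mathcal U$ with $\{OV:V\in v\}$ refining $u$). $(G,X,\alpha)$ is $G$-Tychonoff if it admits an equivariant compactification (a compactification $bX$ with a continuous $G$-action extending $\alpha$). The maximal equiuniformity is the finest equiuniformity on $X$. *)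

From HB Require Import structures.
From mathcomp Require Import all_boot all_order all_algebra.
From mathcomp Require Import all_classical all_reals all_analysis.
From mathcomp Require Import Rstruct Rstruct_topology.

Set Implicit Arguments.
Unset Strict Implicit.
Unset Printing Implicit Defensive.

Import Order.TTheory GRing.Theory Num.Theory.
Local Open Scope classical_set_scope.

Definition tychonoff (T : topologicalType) : Prop :=
  accessible_space T /\
  forall (a : T) (B : set T), closed B -> ~ B a ->
    exists f : T -> Rdefinitions.R,
      continuous f /\ f a = 0%R /\ (forall b, B b -> f b = 1%R).

Definition topological_group (G : topologicalType)
  (mul : G -> G -> G) (inv : G -> G) (e : G) : Prop :=
  tychonoff G /\
  [/\ (forall a b c, mul a (mul b c) = mul (mul a b) c),
      (forall g, mul e g = g),
      (forall g, mul (inv g) g = e),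
      continuous (fun p : G * G => mul p.1 p.2) &
      continuous inv].

Definition G_space (G : topologicalType) (mul : G -> G -> G) (inv : G -> G)
  (e : G) (X : topologicalType) (alpha : G -> X -> X) : Prop :=
  [/\ topological_group mul inv e,
      tychonoff X,
      (forall x, alpha e x = x),
      (forall g h x, alpha g (alpha h x) = alpha (mul g h) x) &
      continuous (fun p : G * X => alpha p.1 p.2)].

Definition equivariant_pair (G H X : topologicalType)
  (mulG : G -> G -> G) (mulH : H -> H -> H)
  (alpha : G -> X -> X) (gamma : H -> X -> X) (phi : G -> H) : Prop :=
  [/\ continuous phi,
      (forall g h, phi (mulG g h) = mulH (phi g) (phi h)) &
      (forall g x, alpha g x = gamma (phi g) x)].

Definition compactification (X K : topologicalType) (i : X -> K) : Prop :=
  [/\ compact [set: K], hausdorff_space K,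
      continuous i /\ injective i,
      (forall A : set X, open A -> exists B : set K, open B /\ i @^-1` B = A) &
      closure (range i) = [set: K]].

Definition G_Tychonoff (G : topologicalType) (mul : G -> G -> G) (e : G)
  (X : topologicalType) (alpha : G -> X -> X) : Prop :=
  exists (K : topologicalType) (i : X -> K) (beta : G -> K -> K),
    [/\ compactification i,
        (forall y, beta e y = y),
        (forall g h y, beta g (beta h y) = beta (mul g h) y),
        continuous (fun p : G * K => beta p.1 p.2) &
        (forall g x, beta g (i x) = i (alpha g x))].

(** * Covering uniformities (families of open covers). *)
Section Covers.
Context {X : topologicalType}.

Definition open_cover (u : set (set X)) : Prop :=
  (forall V, u V -> open V) /\ \bigcup_(V in u) V = [set: X].

Definition refines (u v : set (set X)) : Prop :=
  forall A, u A -> exists2 B, v B & A `<=` B.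

Definition star (u : set (set X)) (A : set X) : set X :=
  \bigcup_(B in [set B | u B /\ B `&` A !=set0]) B.

Definition star_refines (u v : set (set X)) : Prop :=
  forall A, u A -> exists2 B, v B & star u A `<=` B.

Definition uniformity (U : set (set (set X))) : Prop :=
  (forall u, U u -> open_cover u) /\
  [/\ U !=set0,
      (forall u v, U u -> open_cover v -> refines u v -> U v),
      (forall u v, U u -> U v -> exists w, [/\ U w, refines w u & refines w v]),
      (forall u, U u -> exists2 v, U v & star_refines v u) &
      (forall (x : X) (O : set X), open O -> O x ->
         exists2 u, U u & star u [set x] `<=` O)].
End Covers.

Section Equi.
Context {G X : topologicalType}.
Variables (e : G) (alpha : G -> X -> X).

Definition act_cover (g : G) (u : set (set X)) : set (set X) :=
  [set alpha g @` V | V in u].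

Definition act_set (O : set G) (V : set X) : set X :=
  [set y | exists g x, [/\ O g, V x & y = alpha g x]].

Definition saturated (U : set (set (set X))) : Prop :=
  forall u g, U u -> U (act_cover g u).

Definition bounded (U : set (set (set X))) : Prop :=
  forall u, U u -> exists (O : set G) (v : set (set X)),
    [/\ open O, O e, U v & refines [set act_set O V | V in v] u].

Definition equiuniformity (U : set (set (set X))) : Prop :=
  [/\ uniformity U, saturated U & bounded U].

Definition maximal_equiuniformity (U : set (set (set X))) : Prop :=
  equiuniformity U /\ forall V, equiuniformity V -> V `<=` U.
End Equi.

From mathcomp Require Import all_boot all_order all_algebra.
From mathcomp Require Import all_classical all_reals all_analysis.
Local Open Scope classical_set_scope.

(* Along an equivariant pair (phi, id), every equiuniformity for (H, X, gamma)
   is one for (G, X, alpha): translating a cover by g is translating it by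
   phi g, and the preimage under phi of a neighbourhood of the unit of H is a
   neighbourhood of the unit of G.  Hence an H-equiuniformity U which is
   maximal among G-equiuniformities contains every H-equiuniformity.  The
   G-Tychonoff hypothesis only guarantees that such a U exists. *)

Lemma idempotent_eq_unit (H : Type) (mul : H -> H -> H) (inv : H -> H) (e h : H) :
  (forall a b c, mul a (mul b c) = mul (mul a b) c) ->
  (forall g, mul e g = g) -> (forall g, mul (inv g) g = e) ->
  mul h h = h -> h = e.
Proof.
move=> mulA mul1g mulVg hh.
by rewrite -[h]mul1g -(mulVg h) -mulA hh.
Qed.

Lemma morph_unit (G H : Type) (mulG : G -> G -> G) (eG : G)
    (mulH : H -> H -> H) (invH : H -> H) (eH : H) (phi : G -> H) :
  (forall g, mulG eG g = g) ->
  (forall a b c, mulH a (mulH b c) = mulH (mulH a b) c) ->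
  (forall h, mulH eH h = h) -> (forall h, mulH (invH h) h = eH) ->
  (forall g h, phi (mulG g h) = mulH (phi g) (phi h)) ->
  phi eG = eH.
Proof.
move=> mul1G mulAH mul1H mulVH phiM.
apply: (@idempotent_eq_unit _ _ _ _ (phi eG) mulAH mul1H mulVH).
by rewrite -phiM mul1G.
Qed.

Section PullbackAlongPhi.
Variables (G H X : topologicalType) (alpha : G -> X -> X) (gamma : H -> X -> X).
Variable phi : G -> H.
Hypothesis alpha_gamma_phi : forall g x, alpha g x = gamma (phi g) x.

Lemma act_cover_phi g (u : set (set X)) :
  act_cover alpha g u = act_cover gamma (phi g) u.
Proof. by rewrite /act_cover (_ : alpha g = gamma (phi g)) //; apply: funext. Qed.

Lemma act_set_preimage (O : set H) (V : set X) :
  act_set alpha (phi @^-1` O) V `<=` act_set gamma O V.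
Proof. by move=> _ [g [x [Og Vx ->]]]; exists (phi g), x; split. Qed.

Lemma saturated_phi (V : set (set (set X))) :
  saturated gamma V -> saturated alpha V.
Proof. by move=> satV u g Vu; rewrite act_cover_phi; apply: satV. Qed.

Lemma bounded_phi (eG : G) (eH : H) (V : set (set (set X))) :
  continuous phi -> phi eG = eH -> bounded eH gamma V -> bounded eG alpha V.
Proof.
move=> phi_cont phi1 bndV u Vu.
have [N [v [oN Ne Vv v_ref]]] := bndV u Vu.
exists (phi @^-1` N), v; split => //.
- by apply: open_comp => // g _; apply: phi_cont.
- by rewrite /preimage /= phi1.
- move=> _ [W vW <-].
  have [B uB OW_B] := v_ref (act_set gamma N W) (ex_intro2 _ _ W vW erefl).
  by exists B => //; apply: subset_trans (act_set_preimage N W) OW_B.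
Qed.

Lemma equiuniformity_phi (eG : G) (eH : H) (V : set (set (set X))) :
  continuous phi -> phi eG = eH ->
  equiuniformity eH gamma V -> equiuniformity eG alpha V.
Proof.
move=> phi_cont phi1 [uniV satV bndV]; split => //.
- exact: saturated_phi.
- exact: bounded_phi bndV.
Qed.

End PullbackAlongPhi.

Theorem corollary2p13
  (G H X : topologicalType)
  (mulG : G -> G -> G) (invG : G -> G) (eG : G)
  (mulH : H -> H -> H) (invH : H -> H) (eH : H)
  (alpha : G -> X -> X) (gamma : H -> X -> X) (phi : G -> H)
  (U : set (set (set X))) :
  G_space mulG invG eG alpha ->
  G_Tychonoff mulG eG alpha ->
  maximal_equiuniformity eG alpha U ->
  G_space mulH invH eH gamma ->
  equivariant_pair mulG mulH alpha gamma phi ->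
  equiuniformity eH gamma U ->
  maximal_equiuniformity eH gamma U.
Proof.
move=> [[_ [_ mul1G _ _ _]] _ _ _ _] _ [_ U_max]
  [[_ [mulAH mul1H mulVH _ _]] _ _ _ _] [phi_cont phiM alpha_gamma_phi] eqU.
have phi1 : phi eG = eH by exact: morph_unit mul1G mulAH mul1H mulVH phiM.
split => // V eqV.
by apply: U_max; apply: equiuniformity_phi eqV.
Qed.
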